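(* Let $d$ be a positive even integer and $s$ a positive integer with $2s\leqslant d$. Then the union $\bigcup_{\varepsilon\in I^s}C_\varepsilon\subseteq\{0,1,*\}^d$ is a $(d-s)$-neighborly code, i.e. $\mathrm{dist}(u,v)\leqslant d-s$ for all $u,v$ in this union.
   Context: Strings over $\{0,1,*\}$ ($*$ is a ''joker''); for $u,v\in\{0,1,*\}^n$, $\mathrm{dist}(u,v)$ is the number of positions $i$ with $u_i\neq v_i$ and $u_i,v_i\in\{0,1\}$. A set $A\subseteq\{0,1,*\}^n$ is a $k$-neighborly code if $\max_{u,v\in A}\mathrm{dist}(u,v)\leqslant k$. Concatenation identifies $(x,y)$ with the string $xy$. Let $I=\{0,1\}$, $|x|=\sum_i x_i$ for binary $x$. Let $*^0=\{*\}$, $*^1=I$, and for $\varepsilon\in I^s$, $*^\varepsilon=*^{\varepsilon_1}\times\cdots\times *^{\varepsilon_s}$. Let $\alpha=(0,\ldots,0)$, $\omega=(1,\ldots,1)\in I^s$. For $\varepsilon\in I^s\setminus\{\alpha,\omega\}$ let $i=t(\varepsilon)$ be the unique index with $\varepsilon_i\neq\varepsilon_{i+1}=\cdots=\varepsilon_s$, and $A_\varepsilon=\{\varepsilon_1\}\times\cdots\times\{\varepsilon_i\}\times I^{s-1-i}\subseteq I^{s-1}$. Define subsets of $I^{d-s}$: $X_0=\{x\colon |x|\leqslant \frac d2-s\}$; $X_k=\{x\colon |x|=\frac d2-s+k\}$ for $0<k<s$; $X_s=\{x\colon |x|\geqslant \frac d2\}$. For $\varepsilon\in I^s\setminus\{\alpha,\omega\}$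 set $B_\varepsilon=X_{|\varepsilon|}\cap(I^{d-2s+1}\times A_\varepsilon)$, where $I^{d-s}=I^{d-2s+1}\times I^{s-1}$; set $B_\alpha=X_0$, $B_\omega=X_s$. Finally $C_\varepsilon=B_\varepsilon\times *^\varepsilon\subseteq\{0,1,*\}^d$ for $\varepsilon\in I^s$. *)

(* Strings over {0,1,*} are sequences of [option bool]:
   [Some false] = 0, [Some true] = 1, [None] = the joker *. *)
From mathcomp Require Import all_boot.
Set Implicit Arguments. Unset Strict Implicit. Unset Printing Implicit Defensive.

Definition jstring := seq (option bool).

Definition jdist (u v : jstring) : nat :=
  count (fun p : option bool * option bool =>
           match p with (Some a, Some b) => a != b | _ => false end) (zip u v).

Definition neighborly (k : nat) (A : jstring -> Prop) : Prop :=
  forall u v, A u -> A v -> jdist u v <= k.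

Definition weight (x : seq bool) : nat := count id x.

Definition in_starpow (eps : seq bool) (y : jstring) : bool :=
  all2 (fun (e : bool) (c : option bool) => if e then c != None else c == None) eps y.

(* i = t(eps) (1-based): eps_i <> eps_{i+1} = ... = eps_s, with 1 <= i < s *)
Definition is_t (eps : seq bool) (i : nat) : Prop :=
  [/\ 1 <= i < size eps,
      nth false eps i.-1 != nth false eps i &
      forall j, i <= j < size eps -> nth false eps j = nth false eps (size eps).-1].

Definition in_A (eps : seq bool) (z : seq bool) : Prop :=
  size z = (size eps).-1 /\
  exists i, is_t eps i /\ forall j, j < i -> nth false z j = nth false eps j.

Definition in_X (d s k : nat) (x : seq bool) : Prop :=
  size x = d - s /\
  (if k == 0 then weight x <= d./2 - s
   else if k < s then weight x == d./2 - s + k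
   else d./2 <= weight x).

Definition alpha (s : nat) : seq bool := nseq s false.
Definition omega (s : nat) : seq bool := nseq s true.

(* B_eps \subseteq I^{d-s}, with I^{d-s} = I^{d-2s+1} x I^{s-1} *)
Definition in_B (d s : nat) (eps : seq bool) (x : seq bool) : Prop :=
  if eps == alpha s then in_X d s 0 x
  else if eps == omega s then in_X d s s x
  else in_X d s (weight eps) x /\ in_A eps (drop (d - 2 * s + 1) x).

Definition in_C (d s : nat) (eps : seq bool) (u : jstring) : Prop :=
  exists (x : seq bool) (y : jstring),
    [/\ u = map Some x ++ y, in_B d s eps x & in_starpow eps y].

Definition union_C (d s : nat) (u : jstring) : Prop :=
  exists eps : seq bool, size eps = s /\ in_C d s eps u.

(* Write u = x y with x in B_eps and y in *^eps.  Jokers never disagree, so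
   dist(u, u') <= ham(x, x') + |eps /\ eps'|, and it suffices to bound the
   right-hand side by d - s.  Now ham(x, x') is at most the number of ones and
   at most the number of zeros of x and x' together, and the weight conditions
   of the X_k make one of these bounds enough unless neither eps nor eps' is
   alpha or omega.  In that case let i = t(eps) <= t(eps'): the i coordinates
   of x, x' after the first d - 2s + 1 are those of eps, eps', which pays for
   the first i coordinates of eps /\ eps'.  The rest of eps is constant; if it
   is 0 the ones-bound, if it is 1 the zeros-bound on the remaining coordinates
   of x, x' gives d - s. *)
From mathcomp Require Import all_boot zify.

Set Implicit Arguments.
Unset Strict Implicit.

Definition hamming (x y : seq bool) : nat := count (fun p => p.1 != p.2) (zip x y).

Definition overlap (x y : seq bool) : nat := count (fun p => p.1 && p.2) (zip x y).

Lemma hamming_cons a b x y : hamming (a :: x) (b :: y) = (a != b) + hamming x y.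
Proof. by []. Qed.

Lemma overlap_cons a b x y : overlap (a :: x) (b :: y) = a && b + overlap x y.
Proof. by []. Qed.

Lemma weight_cons a x : weight (a :: x) = a + weight x.
Proof. by []. Qed.

Lemma weight_cat x y : weight (x ++ y) = weight x + weight y.
Proof. exact: count_cat. Qed.

Lemma weight_nseq n b : weight (nseq n b) = b * n.
Proof. exact: count_nseq. Qed.

Lemma weight_le_size x : weight x <= size x.
Proof. exact: count_size. Qed.

Lemma weight_eq0 x : weight x = 0 -> x = alpha (size x).
Proof.
move/eqP; rewrite eqn0Ngt -has_count -all_predC => /allP x0.
by apply/all_pred1P/allP => b /x0 /negbTE ->.
Qed.

Lemma weight_eq_size x : weight x = size x -> x = omega (size x).
Proof.
by move/eqP; rewrite -all_count => /allP x1; apply/all_pred1P/allP => b /x1 ->.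
Qed.

Lemma hammingC x y : hamming x y = hamming y x.
Proof.
elim: x y => [|a x IH] [|b y] //.
by rewrite !hamming_cons IH eq_sym.
Qed.

Lemma overlapC x y : overlap x y = overlap y x.
Proof.
elim: x y => [|a x IH] [|b y] //.
by rewrite !overlap_cons IH andbC.
Qed.

Lemma hamming_cat x1 x2 y1 y2 : size x1 = size y1 ->
  hamming (x1 ++ x2) (y1 ++ y2) = hamming x1 y1 + hamming x2 y2.
Proof. by move=> s1; rewrite /hamming zip_cat // count_cat. Qed.

Lemma overlap_cat x1 x2 y1 y2 : size x1 = size y1 ->
  overlap (x1 ++ x2) (y1 ++ y2) = overlap x1 y1 + overlap x2 y2.
Proof. by move=> s1; rewrite /overlap zip_cat // count_cat. Qed.

Lemma hamming_le_weightD x y : hamming x y <= weight x + weight y.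
Proof.
elim: x y => [|a x IH] [|b y] //.
by rewrite hamming_cons !weight_cons; have := IH y; case: a; case: b => /=; lia.
Qed.

Lemma hamming_weightD_le x y : size x = size y ->
  hamming x y + weight x + weight y <= 2 * size x.
Proof.
elim: x y => [|a x IH] [|b y] // [/IH].
by rewrite hamming_cons !weight_cons; case: a; case: b => /=; lia.
Qed.

Lemma hamming_overlap_le x y : hamming x y + overlap x y <= size x.
Proof.
elim: x y => [|a x IH] [|b y] //.
by rewrite hamming_cons overlap_cons; have := IH y; case: a; case: b => /=; lia.
Qed.

Lemma overlap_le_weightl x y : overlap x y <= weight x.
Proof.
elim: x y => [|a x IH] [|b y] //.
by rewrite overlap_cons weight_cons; have := IH y; case: a; case: b => /=; lia.
Qed.

Lemma overlap_le_weightr x y : overlap x y <= weight y.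
Proof. by rewrite overlapC overlap_le_weightl. Qed.

Lemma overlap_nseq_true y : overlap (nseq (size y) true) y = weight y.
Proof. by elim: y => //= b y IH; rewrite overlap_cons IH. Qed.

Lemma overlap_nseq_false n y : overlap (nseq n false) y = 0.
Proof. by apply/eqP; rewrite -leqn0 -[0](weight_nseq n false) overlap_le_weightl. Qed.

Lemma jdist_cat u1 u2 v1 v2 : size u1 = size v1 ->
  jdist (u1 ++ u2) (v1 ++ v2) = jdist u1 v1 + jdist u2 v2.
Proof. by move=> s1; rewrite /jdist zip_cat // count_cat. Qed.

Lemma jdist_map_Some x y : jdist (map Some x) (map Some y) = hamming x y.
Proof. by elim: x y => [|a x IH] [|b y] //; rewrite /= hamming_cons -IH. Qed.

Lemma jdist_le_overlap e e' y y' :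
  in_starpow e y -> in_starpow e' y' -> jdist y y' <= overlap e e'.
Proof.
rewrite /in_starpow.
elim: e e' y y' => [|a e IH] [|b e'] [|u y] [|v y'] //=; try by rewrite andbF.
move=> /andP[ua /IH {}IH] /andP[vb /IH].
rewrite overlap_cons /jdist /= -/(jdist y y').
by case: a ua; case: b vb; case: u; case: v => // *; case: (_ != _) => /=; lia.
Qed.

Lemma take_eq_nth {T : Type} (x0 : T) i (z e : seq T) :
  i <= size z -> i <= size e -> (forall j, j < i -> nth x0 z j = nth x0 e j) ->
  take i z = take i e.
Proof.
move=> iz ie ze; apply: (eq_from_nth (x0 := x0)); first by rewrite !size_takel.
by move=> j; rewrite size_takel // => ji; rewrite !nth_take ?ze.
Qed.

Lemma take_eq_le {T : Type} j k (z t : seq T) :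
  j <= k -> take k z = take k t -> take j z = take j t.
Proof. by move=> jk zt; rewrite -(take_takel z jk) zt take_takel. Qed.

Lemma drop_eq_nseq {T : eqType} (x0 c : T) i (e : seq T) :
  (forall j, i <= j < size e -> nth x0 e j = c) -> drop i e = nseq (size e - i) c.
Proof.
move=> ec; rewrite -size_drop; apply/all_pred1P/(all_nthP x0) => j.
by rewrite size_drop nth_drop => ji; apply/eqP/ec; lia.
Qed.

Lemma in_B_size d s e x : in_B d s e x -> size x = d - s.
Proof. by rewrite /in_B; case: ifP => _; [case | case: ifP => _; [case | case=> [[]]]]. Qed.

(* In [BShapeMid], [i = t(eps)] and [c] is the value of [eps] from position [i] on. *)
Variant B_shape (d s : nat) (e x : seq bool) : Prop :=
  | BShapeAlpha of weight e = 0
  | BShapeOmega of d./2 <= weight x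
  | BShapeMid i c of 0 < i < s & weight x = d./2 - s + weight e
      & take i (drop (d - 2 * s + 1) x) = take i e & drop i e = nseq (s - i) c.

Lemma in_B_shape d s e x : 0 < s -> size e = s -> in_B d s e x -> B_shape d s e x.
Proof.
rewrite /in_B => s0 se.
case: eqP => [-> _|ne_alpha]; first by apply: BShapeAlpha; rewrite weight_nseq.
case: eqP => [_ [_]|ne_omega]; first by rewrite eqn0Ngt s0 ltnn => /BShapeOmega.
case=> [[_ wx] [sz [i [[/andP[i0 i_lt] _ tail] prefix]]]].
have w_neq0 : weight e != 0 by apply/eqP => /weight_eq0; rewrite se => /ne_alpha.
have w_lt : weight e < s.
  rewrite ltn_neqAle -se weight_le_size andbT.
  by apply/eqP => /weight_eq_size; rewrite se => /ne_omega.
rewrite (negbTE w_neq0) w_lt in wx.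
apply: (@BShapeMid _ _ _ _ i (nth false e (size e).-1)).
- by rewrite i0 -se.
- exact/eqP.
- by apply: take_eq_nth prefix; rewrite ?sz; lia.
- by rewrite -se; apply: drop_eq_nseq tail.
Qed.

(* [x = P Q S] and [eps = Q c^(s-i)] share the window [Q], and [eps' = Q' D'].
   Off the window, [hamming] is bounded by the ones when [c = 0] and by the
   zeros when [c = 1]. *)
Lemma window_bound h s i c (P Q S P' Q' S' D' : seq bool) :
  s <= h -> i <= s -> size P = size P' -> size Q = i -> size Q' = i -> size S = size S' ->
  size D' = s - i -> size P + size S = 2 * h - s - i ->
  weight (P ++ Q ++ S) = h - s + weight (Q ++ nseq (s - i) c) ->
  weight (P' ++ Q' ++ S') = h - s + weight (Q' ++ D') ->
  hamming (P ++ Q ++ S) (P' ++ Q' ++ S') + overlap (Q ++ nseq (s - i) c) (Q' ++ D')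
    <= 2 * h - s.
Proof.
move=> sh si sP sQ sQ' sS sD sPS.
rewrite !weight_cat !hamming_cat ?size_cat ?sP ?sQ ?sQ' // overlap_cat ?sQ ?sQ' //.
have := hamming_overlap_le Q Q'; rewrite sQ => hQ.
have := weight_le_size D'; rewrite sD => wD.
case: c.
- rewrite weight_nseq mul1n -sD overlap_nseq_true.
  have := hamming_weightD_le sP; have := hamming_weightD_le sS; lia.
- rewrite weight_nseq mul0n overlap_nseq_false.
  have := hamming_le_weightD P P'; have := hamming_le_weightD S S'; lia.
Qed.

Lemma mid_pair_bound d s i c e x e' x' :
  ~~ odd d -> 2 * s <= d -> i < s ->
  size e = s -> size e' = s -> size x = d - s -> size x' = d - s ->
  weight x = d./2 - s + weight e -> weight x' = d./2 - s + weight e' ->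
  take i (drop (d - 2 * s + 1) x) = take i e ->
  take i (drop (d - 2 * s + 1) x') = take i e' ->
  drop i e = nseq (s - i) c ->
  hamming x x' + overlap e e' <= d - s.
Proof.
move=> ev sd i_lt se se' sx sx' wx wx' Qx Qx' tail.
set L := d - 2 * s + 1.
have split_x z : z = take L z ++ take i (drop L z) ++ drop i (drop L z).
  by rewrite !cat_take_drop.
have e_split : e = take i e ++ nseq (s - i) c by rewrite -tail cat_take_drop.
have e'_split : e' = take i e' ++ drop i e' by rewrite cat_take_drop.
have := window_bound (h := d./2) (s := s) (i := i) (c := c)
  (P := take L x) (Q := take i e) (S := drop i (drop L x))
  (P' := take L x') (Q' := take i e') (S' := drop i (drop L x')) (D' := drop i e').
rewrite -e_split -e'_split -Qx -Qx' -!split_x [2 * d./2]mul2n even_halfK //.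
apply; rewrite ?size_takel ?size_drop ?sx ?sx' ?se ?se' /L //; lia.
Qed.

Lemma B_shape_pair_bound d s e x e' x' :
  ~~ odd d -> 2 * s <= d -> size e = s -> size e' = s ->
  size x = d - s -> size x' = d - s ->
  B_shape d s e x -> B_shape d s e' x' -> hamming x x' + overlap e e' <= d - s.
Proof.
move=> ev sd se se' sx sx' shape shape'.
have d_half := even_halfK ev.
have hw := hamming_weightD_le (etrans sx (esym sx')).
have ho := hamming_overlap_le x x'; have we_s := weight_le_size e.
have ow := overlap_le_weightl e e'; have ow' := overlap_le_weightr e e'.
case: shape => [we | wx | i c /andP[_ i_lt] wx Qx tail];
  case: shape' => [we' | wx' | i' c' /andP[_ i_lt'] wx' Qx' tail']; try lia.
case: (leqP i i') => [ii' | /ltnW i'i].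
- exact: (mid_pair_bound ev sd i_lt se se' sx sx' wx wx' Qx (take_eq_le ii' Qx') tail).
- rewrite hammingC overlapC.
  exact: (mid_pair_bound ev sd i_lt' se' se sx' sx wx' wx Qx' (take_eq_le i'i Qx) tail').
Qed.

Theorem lemma5 (d s : nat) :
  0 < d -> ~~ odd d -> 0 < s -> 2 * s <= d ->
  neighborly (d - s) (union_C d s).
Proof.
move=> _ ev s0 sd u v [e [se [x [y [-> Bx Sy]]]]] [e' [se' [x' [y' [-> Bx' Sy']]]]].
have sx := in_B_size Bx; have sx' := in_B_size Bx'.
rewrite jdist_cat ?size_map ?sx ?sx' // jdist_map_Some.
have := jdist_le_overlap Sy Sy'.
have := B_shape_pair_bound ev sd se se' sx sx' (in_B_shape s0 se Bx) (in_B_shape s0 se' Bx').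
lia.
Qed.
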